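(* Let $(\underline{\mathbf{v}},\underline{\boldsymbol{\rho}})$ be a subsolution and $(\overline{\mathbf{v}},\overline{\boldsymbol{\rho}})$ a supersolution of the system described in the context, both locally bounded in time, and assume that for all $j\in\mathbb{Z}$, $\underline{v}_j(0,x)\le\overline{v}_j(0,x)$ for all $x\in[0,1]$ and $\underline{\rho}_j(0)\le\overline{\rho}_j(0)$. Then $\underline{v}_j(t,x)\le\overline{v}_j(t,x)$ and $\underline{\rho}_j(t)\le\overline{\rho}_j(t)$ for all $t>0$, $x\in[0,1]$, $j\in\mathbb{Z}$. If furthermore $\underline{\mathbf{v}}(0)\not\equiv\overline{\mathbf{v}}(0)$ or $\underline{\boldsymbol{\rho}}(0)\not\equiv\overline{\boldsymbol{\rho}}(0)$, then $\underline{v}_j(t,x)<\overline{v}_j(t,x)$ and $\underline{\rho}_j(t)<\overline{\rho}_j(t)$ for all $t>0$, $x\in[0,1]$, $j\in\mathbb{Z}$.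
   Context: Fix $\alpha,\beta,d>0$ and $f\in\mathscr{C}^1([0,1])$ with $f(0)=f(1)=0$, $0<f(u)\le f'(0)u$ on $(0,1)$, extended to a locally Lipschitz function on $\mathbb{R}$ negative on $\mathbb{R}\setminus[0,1]$. A pair $(\mathbf{v},\boldsymbol{\rho})=(v_j,\rho_j)_{j\in\mathbb{Z}}$ is in the regularity class if for every $j$: $\rho_j\in\mathscr{C}^1([0,+\infty))$, $v_j\in\mathscr{C}^0([0,+\infty)\times[0,1])$, $\partial_tv_j,\partial_x^2v_j\in\mathscr{C}^0((0,+\infty)\times(0,1))$, $\partial_xv_j\in\mathscr{C}^0((0,+\infty)\times[0,1])$. Such a pair $(\overline{\mathbf{v}},\overline{\boldsymbol{\rho}})$ is a supersolution if for all $t>0$, $j\in\mathbb{Z}$: $\partial_t\overline{v}_j\ge d\,\partial_x^2\overline{v}_j$ on $(0,1)$; $\overline{\rho}_j'(t)\ge f(\overline{\rho}_j(t))+\alpha(\overline{v}_j(t,0)+\overline{v}_{j-1}(t,1))-2\beta\overline{\rho}_j(t)$; $-d\,\partial_x\overline{v}_j(t,0)+\alpha\overline{v}_j(t,0)\ge\beta\overline{\rho}_j(t)$; $d\,\partial_x\overline{v}_j(t,1)+\alpha\overline{v}_j(t,1)\ge\beta\overline{\rho}_{j+1}(t)$. A subsolution is defined in the same way with all these inequalities reversed. Locally bounded in time means that for every $T>0$, $\sup_{t\in[0,T],\,j\in\mathbb{Z},\,x\in[0,1]}(|v_j(t,x)|+|\rho_j(t)|)<\infty$. *)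

From Stdlib Require Import Reals ZArith.
From Coquelicot Require Import Coquelicot.
Open Scope R_scope.

Definition deriv_within (D : R -> Prop) (f : R -> R) (x l : R) : Prop :=
  filterlim (fun y => (f y - f x) / (y - x))
    (within (fun y => D y /\ y <> x) (locally x)) (locally l).

Definition cont_on (D : R -> Prop) (g : R -> R) : Prop :=
  forall t, D t -> forall eps, 0 < eps -> exists delta, 0 < delta /\
    forall s, D s -> Rabs (s - t) < delta -> Rabs (g s - g t) < eps.

Definition cont2_on (D : R -> R -> Prop) (g : R -> R -> R) : Prop :=
  forall t x, D t x -> forall eps, 0 < eps -> exists delta, 0 < delta /\
    forall s y, D s y -> Rabs (s - t) < delta -> Rabs (y - x) < delta ->
      Rabs (g s y - g t x) < eps.

Definition KPP_f (f : R -> R) : Prop :=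
  (exists df : R -> R,
     (forall u, 0 <= u <= 1 -> deriv_within (fun y => 0 <= y <= 1) f u (df u)) /\
     cont_on (fun y => 0 <= y <= 1) df /\
     (forall u, 0 < u < 1 -> 0 < f u /\ f u <= df 0 * u)) /\
  f 0 = 0 /\ f 1 = 0 /\
  (forall a b, exists L, forall x y, a <= x <= b -> a <= y <= b ->
     Rabs (f x - f y) <= L * Rabs (x - y)) /\
  (forall u, u < 0 \/ 1 < u -> f u < 0).

(* Regularity class, with the derivatives given as witness functions
   drho = rho_j', vt = d_t v_j, vx = d_x v_j, vxx = d_x^2 v_j. *)
Definition regular (v : Z -> R -> R -> R) (rho : Z -> R -> R)
  (drho : Z -> R -> R) (vt vx vxx : Z -> R -> R -> R) : Prop :=
  forall j : Z,
    (forall t, 0 <= t -> deriv_within (fun s => 0 <= s) (rho j) t (drho j t)) /\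
    cont_on (fun s => 0 <= s) (drho j) /\
    cont2_on (fun t x => 0 <= t /\ 0 <= x <= 1) (v j) /\
    (forall t x, 0 < t -> 0 < x < 1 -> is_derive (fun s => v j s x) t (vt j t x)) /\
    (forall t x, 0 < t -> 0 <= x <= 1 ->
       deriv_within (fun y => 0 <= y <= 1) (fun y => v j t y) x (vx j t x)) /\
    (forall t x, 0 < t -> 0 < x < 1 -> is_derive (fun y => vx j t y) x (vxx j t x)) /\
    cont2_on (fun t x => 0 < t /\ 0 < x < 1) (vt j) /\
    cont2_on (fun t x => 0 < t /\ 0 < x < 1) (vxx j) /\
    cont2_on (fun t x => 0 < t /\ 0 <= x <= 1) (vx j).

Definition supersolution (alpha beta d : R) (f : R -> R)
  (v : Z -> R -> R -> R) (rho : Z -> R -> R) : Prop :=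
  exists (drho : Z -> R -> R) (vt vx vxx : Z -> R -> R -> R),
    regular v rho drho vt vx vxx /\
    forall (t : R) (j : Z), 0 < t ->
      (forall x, 0 < x < 1 -> vt j t x >= d * vxx j t x) /\
      drho j t >= f (rho j t) + alpha * (v j t 0 + v (j - 1)%Z t 1) - 2 * beta * rho j t /\
      - d * vx j t 0 + alpha * v j t 0 >= beta * rho j t /\
      d * vx j t 1 + alpha * v j t 1 >= beta * rho (j + 1)%Z t.

Definition subsolution (alpha beta d : R) (f : R -> R)
  (v : Z -> R -> R -> R) (rho : Z -> R -> R) : Prop :=
  exists (drho : Z -> R -> R) (vt vx vxx : Z -> R -> R -> R),
    regular v rho drho vt vx vxx /\
    forall (t : R) (j : Z), 0 < t ->
      (forall x, 0 < x < 1 -> vt j t x <= d * vxx j t x) /\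
      drho j t <= f (rho j t) + alpha * (v j t 0 + v (j - 1)%Z t 1) - 2 * beta * rho j t /\
      - d * vx j t 0 + alpha * v j t 0 <= beta * rho j t /\
      d * vx j t 1 + alpha * v j t 1 <= beta * rho (j + 1)%Z t.

Definition locally_bounded_in_time (v : Z -> R -> R -> R) (rho : Z -> R -> R) : Prop :=
  forall T, 0 < T -> exists M, forall t j x, 0 <= t <= T -> 0 <= x <= 1 ->
    Rabs (v j t x) + Rabs (rho j t) <= M.

(* Subtracting the subsolution from the supersolution gives a pair (v, rho) that is a
   supersolution of a linear lattice system whose reaction coefficient
   c = (f ru - f rl) / (ru - rl) - 2 beta is locally bounded, f being locally Lipschitz.

   Weak comparison: adding eps e^(K t) (a_j, b_j), with b_j = 1 + j^2 and
   alpha a_j = beta (b_j + b_(j+1)), turns (v, rho) into a strict supersolution which is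
   positive for |j| large, since (v, rho) is bounded on [0, T].  At a first time where it
   touches zero we get a contradiction: at an interior point of an edge from the heat
   operator, at an endpoint from the flux condition, at a node from the node equation.
   Letting eps -> 0 gives v, rho >= 0.

   Strong comparison: each v_j is a nonnegative supersolution of the heat equation.  An
   exponential barrier (Hopf lemma) together with the flux conditions shows that if
   v_j (t, .) is positive somewhere it is positive on the whole edge, and a decaying sine
   barrier carries positivity forward in time.  The node equation passes positivity from an
   edge to its endpoints' nodes, the flux conditions from a node to both adjacent edges, so
   positivity spreads over all of Z from any place where the initial data differ. *)

From Stdlib Require Import Reals ZArith Lra Lia Classical.
From Coquelicot Require Import Coquelicot.
Open Scope R_scope.

(** * Derivatives within a set, continuity and continuous induction *)

Lemma deriv_within_eps D g x l :
  deriv_within D g x l <->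
  forall eps, 0 < eps -> exists del, 0 < del /\ forall y, D y -> y <> x ->
    Rabs (y - x) < del -> Rabs ((g y - g x) / (y - x) - l) < eps.
Proof.
  split.
  - intros H eps Heps.
    destruct (H (fun z => Rabs (z - l) < eps)) as [del Hdel].
    { exists (mkposreal eps Heps). intros z Hz. exact Hz. }
    exists del. split; [apply cond_pos|]. intros y Dy Ny Hy. now apply Hdel.
  - intros H P [eps HP]. destruct (H eps (cond_pos eps)) as [del [Hdel K]].
    exists (mkposreal del Hdel). intros y Hy [Dy Ny]. apply HP. now apply K.
Qed.

Lemma deriv_within_of_is_derive D g x l : is_derive g x l -> deriv_within D g x l.
Proof.
  intros H. apply is_derive_Reals in H. apply deriv_within_eps. intros eps Heps.
  destruct (H eps Heps) as [del K]. exists del. split; [apply cond_pos|].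
  intros y _ Ny Hy. specialize (K (y - x)). replace (x + (y - x)) with y in K by ring.
  apply K; [lra | exact Hy].
Qed.

Lemma is_derive_of_deriv_within D g x l r : 0 < r ->
  (forall y, Rabs (y - x) < r -> D y) -> deriv_within D g x l -> is_derive g x l.
Proof.
  intros Hr HD H. apply is_derive_Reals. intros eps Heps.
  destruct (proj1 (deriv_within_eps D g x l) H eps Heps) as [del [Hdel K]].
  exists (mkposreal _ (Rmin_pos _ _ Hdel Hr)). simpl. intros h Hh Hhl.
  pose proof (Rmin_l del r). pose proof (Rmin_r del r).
  specialize (K (x + h)). replace (x + h - x) with h in K by ring.
  apply K; [apply HD; replace (x + h - x) with h by ring | |]; lra.
Qed.

Lemma deriv_within_plus D f g x l1 l2 :
  deriv_within D f x l1 -> deriv_within D g x l2 ->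
  deriv_within D (fun y => f y + g y) x (l1 + l2).
Proof.
  intros H1 H2. unfold deriv_within.
  apply (filterlim_ext (fun y => (f y - f x) / (y - x) + (g y - g x) / (y - x))).
  { intros y. unfold Rdiv. ring. }
  exact (filterlim_comp_2 _ _ Rplus H1 H2 (filterlim_plus l1 l2)).
Qed.

Lemma deriv_within_opp D f x l :
  deriv_within D f x l -> deriv_within D (fun y => - f y) x (- l).
Proof.
  intros H. unfold deriv_within.
  apply (filterlim_ext (fun y => - ((f y - f x) / (y - x)))).
  { intros y. unfold Rdiv. ring. }
  exact (filterlim_comp _ _ _ _ Ropp _ _ _ H (filterlim_opp l)).
Qed.

Lemma deriv_within_minus D f g x l1 l2 :
  deriv_within D f x l1 -> deriv_within D g x l2 ->
  deriv_within D (fun y => f y - g y) x (l1 - l2).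
Proof.
  intros H1 H2. exact (deriv_within_plus _ _ _ _ _ _ H1 (deriv_within_opp _ _ _ _ H2)).
Qed.

Lemma deriv_within_continuous D g x l : deriv_within D g x l ->
  forall eps, 0 < eps -> exists del, 0 < del /\
    forall y, D y -> Rabs (y - x) < del -> Rabs (g y - g x) < eps.
Proof.
  intros H eps Heps.
  destruct (proj1 (deriv_within_eps D g x l) H 1 Rlt_0_1) as [del [Hdel K]].
  set (B := Rabs l + 1). assert (HB : 0 < B) by (unfold B; pose proof (Rabs_pos l); lra).
  exists (Rmin del (eps / B)). split; [apply Rmin_pos; [lra | apply Rdiv_lt_0_compat; lra]|].
  intros y Dy Hy. pose proof (Rmin_l del (eps / B)). pose proof (Rmin_r del (eps / B)).
  destruct (Req_dec y x) as [->|Ny]; [rewrite Rminus_eq_0, Rabs_R0; lra|].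
  specialize (K y Dy Ny ltac:(lra)).
  replace (g y - g x) with ((g y - g x) / (y - x) * (y - x))
    by (field; apply Rminus_eq_contra; exact Ny).
  rewrite Rabs_mult.
  assert (Rabs ((g y - g x) / (y - x)) <= B)
    by (unfold B; pose proof (Rabs_triang_inv ((g y - g x) / (y - x)) l); lra).
  apply Rle_lt_trans with (B * Rabs (y - x)); [apply Rmult_le_compat_r; [apply Rabs_pos | lra]|].
  replace eps with (B * (eps / B)) by (field; lra). apply Rmult_lt_compat_l; lra.
Qed.

Lemma deriv_within_ge_slope D g x l k r : 0 < r -> deriv_within D g x l ->
  (forall y, x < y < x + r -> D y /\ k * (y - x) <= g y - g x) -> k <= l.
Proof.
  intros Hr H Hs. apply Rnot_lt_le. intros Hl.
  destruct (proj1 (deriv_within_eps D g x l) H (k - l) ltac:(lra)) as [del [Hdel K]].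
  pose proof (Rmin_l del r). pose proof (Rmin_r del r). pose proof (Rmin_pos del r Hdel Hr).
  set (y := x + Rmin del r / 2).
  destruct (Hs y ltac:(unfold y; lra)) as [Dy Hy].
  specialize (K y Dy ltac:(unfold y; lra) ltac:(unfold y; rewrite Rabs_right; lra)).
  apply Rabs_def2 in K.
  assert (k <= (g y - g x) / (y - x)) by (apply Rle_div_r; [unfold y; lra | exact Hy]).
  lra.
Qed.

Lemma deriv_within_le_slope D g x l k r : 0 < r -> deriv_within D g x l ->
  (forall y, x - r < y < x -> D y /\ k * (x - y) <= g y - g x) -> l <= - k.
Proof.
  intros Hr H Hs. apply Rnot_lt_le. intros Hl.
  destruct (proj1 (deriv_within_eps D g x l) H (l + k) ltac:(lra)) as [del [Hdel K]].
  pose proof (Rmin_l del r). pose proof (Rmin_r del r). pose proof (Rmin_pos del r Hdel Hr).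
  set (y := x - Rmin del r / 2).
  destruct (Hs y ltac:(unfold y; lra)) as [Dy Hy].
  specialize (K y Dy ltac:(unfold y; lra) ltac:(unfold y; rewrite Rabs_left; lra)).
  apply Rabs_def2 in K.
  assert (k <= (g y - g x) / (x - y)) by (apply Rle_div_r; [unfold y; lra | exact Hy]).
  replace ((g y - g x) / (y - x)) with (- ((g y - g x) / (x - y))) in K
    by (field; unfold y; lra).
  lra.
Qed.

Lemma continuity_pt_of_is_derive g x l : is_derive g x l -> continuity_pt g x.
Proof.
  intros H. apply continuity_pt_filterlim.
  apply (ex_derive_continuous (K := R_AbsRing) (V := R_NormedModule)). now exists l.
Qed.

Lemma exp_le_compat x y : x <= y -> exp x <= exp y.
Proof. intros [H|H]; [left; now apply exp_increasing | subst; lra]. Qed.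

Lemma nonneg_of_left_limit (g : R -> R) a t : a < t ->
  (forall s, a <= s < t -> 0 < g s) ->
  (forall eps, 0 < eps -> exists del, 0 < del /\
     forall s, a <= s < t -> t - s < del -> Rabs (g s - g t) < eps) ->
  0 <= g t.
Proof.
  intros Hat Hpos Hc. apply Rnot_lt_le. intros Hneg.
  destruct (Hc (- g t) ltac:(lra)) as [del [Hdel K]].
  pose proof (Rmin_l del (t - a)). pose proof (Rmin_r del (t - a)).
  pose proof (Rmin_pos del (t - a) Hdel ltac:(lra)).
  set (s := t - Rmin del (t - a) / 2).
  specialize (K s ltac:(unfold s; lra) ltac:(unfold s; lra)). apply Rabs_def2 in K.
  specialize (Hpos s ltac:(unfold s; lra)). lra.
Qed.

Lemma cont2_on_nonneg_of_left D u a t x : a < t ->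
  (forall s, a <= s <= t -> D s x) -> cont2_on D u ->
  (forall s, a <= s < t -> 0 < u s x) -> 0 <= u t x.
Proof.
  intros Hat HD Hc Hpos. apply (nonneg_of_left_limit (fun s => u s x) a t Hat Hpos).
  intros eps Heps. destruct (Hc t x (HD t ltac:(lra)) eps Heps) as [del [Hdel K]].
  exists del. split; [exact Hdel|]. intros s Hs Hts. apply K; [apply HD; lra | | ].
  - rewrite Rabs_left; lra.
  - rewrite Rminus_eq_0, Rabs_R0. exact Hdel.
Qed.

Lemma deriv_within_nonneg_of_left D g l a t : a < t ->
  (forall s, a <= s <= t -> D s) -> deriv_within D g t l ->
  (forall s, a <= s < t -> 0 < g s) -> 0 <= g t.
Proof.
  intros Hat HD Hg Hpos. apply (nonneg_of_left_limit g a t Hat Hpos).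
  intros eps Heps. destruct (deriv_within_continuous D g t l Hg eps Heps) as [del [Hdel K]].
  exists del. split; [exact Hdel|]. intros s Hs Hts. apply K; [apply HD; lra |].
  rewrite Rabs_left; lra.
Qed.

Lemma nonneg_of_pos_perturbation y C : 0 < C ->
  (forall eps, 0 < eps -> 0 < y + eps * C) -> 0 <= y.
Proof.
  intros HC H. apply Rnot_lt_le. intros Hy.
  specialize (H (- y / (2 * C)) ltac:(apply Rdiv_lt_0_compat; lra)).
  replace (- y / (2 * C) * C) with (- y / 2) in H by (field; lra). lra.
Qed.

Lemma cont2_on_mono (D D' : R -> R -> Prop) g :
  (forall t x, D' t x -> D t x) -> cont2_on D g -> cont2_on D' g.
Proof.
  intros HD H t x Dtx eps Heps. destruct (H t x (HD _ _ Dtx) eps Heps) as [del [Hdel K]].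
  exists del. split; [exact Hdel|]. intros s y Dsy. apply K. auto.
Qed.

Lemma cont2_on_plus D g1 g2 : cont2_on D g1 -> cont2_on D g2 ->
  cont2_on D (fun t x => g1 t x + g2 t x).
Proof.
  intros H1 H2 t x Dtx eps Heps.
  destruct (H1 t x Dtx (eps / 2)) as [d1 [Hd1 K1]]; [lra|].
  destruct (H2 t x Dtx (eps / 2)) as [d2 [Hd2 K2]]; [lra|].
  exists (Rmin d1 d2). split; [apply Rmin_pos; auto|]. intros s y Dsy Hs Hy.
  pose proof (Rmin_l d1 d2). pose proof (Rmin_r d1 d2).
  specialize (K1 s y Dsy ltac:(lra) ltac:(lra)). specialize (K2 s y Dsy ltac:(lra) ltac:(lra)).
  replace (g1 s y + g2 s y - (g1 t x + g2 t x)) with ((g1 s y - g1 t x) + (g2 s y - g2 t x))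
    by ring.
  eapply Rle_lt_trans; [apply Rabs_triang | lra].
Qed.

Lemma cont2_on_opp D g : cont2_on D g -> cont2_on D (fun t x => - g t x).
Proof.
  intros H t x Dtx eps Heps. destruct (H t x Dtx eps Heps) as [del [Hdel K]].
  exists del. split; [exact Hdel|]. intros s y Dsy Hs Hy.
  replace (- g s y - - g t x) with (- (g s y - g t x)) by ring. rewrite Rabs_Ropp. auto.
Qed.

Lemma cont2_on_minus D g1 g2 : cont2_on D g1 -> cont2_on D g2 ->
  cont2_on D (fun t x => g1 t x - g2 t x).
Proof. intros H1 H2. exact (cont2_on_plus D g1 _ H1 (cont2_on_opp D g2 H2)). Qed.

Lemma cont2_on_of_continuity_2d D g :
  (forall t x, continuity_2d_pt g t x) -> cont2_on D g.
Proof.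
  intros H t x _ eps Heps. destruct (H t x (mkposreal eps Heps)) as [del K].
  exists del. split; [apply cond_pos|]. intros s y _ Hs Hy. now apply K.
Qed.

Lemma lub_approx E m : is_lub E m -> forall eta, 0 < eta -> exists y, E y /\ m - eta < y.
Proof.
  intros [Hub Hleast] eta Heta. apply NNPP. intros N.
  assert (is_upper_bound E (m - eta)).
  { intros y Ey. apply Rnot_lt_le. intros Hy. apply N. now exists y. }
  specialize (Hleast _ H). lra.
Qed.

Lemma continuous_induction (P : R -> Prop) a b : a <= b -> P a ->
  (forall t, a <= t < b -> (forall s, a <= s <= t -> P s) ->
     exists del, 0 < del /\ forall s, t < s < t + del -> s <= b -> P s) ->
  (forall t, a < t <= b -> (forall s, a <= s < t -> P s) -> P t) ->
  forall t, a <= t <= b -> P t.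
Proof.
  intros Hab Ha Hstep Hclose.
  set (E := fun s => a <= s <= b /\ forall u, a <= u <= s -> P u).
  assert (HaE : E a) by (split; [lra | intros u Hu; now replace u with a by lra]).
  destruct (completeness E) as [m Hm].
  { exists b. intros s [Hs _]. lra. }
  { now exists a. }
  assert (Hma : a <= m) by (apply Hm; exact HaE).
  assert (Hmb : m <= b) by (apply Hm; intros s [Hs _]; lra).
  assert (Hbelow : forall u, a <= u < m -> P u).
  { intros u Hu. destruct (lub_approx E m Hm (m - u)) as [y [[_ Hy] Hyu]]; [lra|].
    apply Hy. lra. }
  assert (Hupto : forall u, a <= u <= m -> P u).
  { intros u Hu. destruct (Req_dec u m) as [->|Hne]; [|apply Hbelow; lra].
    destruct (Req_dec m a) as [->|Hma']; [exact Ha|]. apply Hclose; [lra | exact Hbelow]. }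
  destruct (Req_dec m b) as [<-|Hmb'].
  - intros t Ht. apply Hupto. exact Ht.
  - exfalso. destruct (Hstep m ltac:(lra) Hupto) as [del [Hdel Hd]].
    pose proof (Rmin_l (m + del / 2) b). pose proof (Rmin_r (m + del / 2) b).
    set (s := Rmin (m + del / 2) b) in *.
    assert (Hs : s = m + del / 2 \/ s = b) by (unfold s, Rmin; destruct Rle_dec; auto).
    assert (E s).
    { split; [destruct Hs; lra|]. intros u Hu. destruct (Rle_lt_dec u m); [apply Hupto; lra|].
      apply Hd; lra. }
    assert (s <= m) by (apply Hm; assumption).
    destruct Hs; lra.
Qed.

Lemma cont2_on_pos_near D g t x : D t x -> cont2_on D g -> 0 < g t x ->
  exists eta, 0 < eta /\
    forall s y, D s y -> Rabs (s - t) < eta -> Rabs (y - x) < eta -> 0 < g s y.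
Proof.
  intros Dtx Hc Hp. destruct (Hc t x Dtx (g t x / 2) ltac:(lra)) as [eta [Heta K]].
  exists eta. split; [exact Heta|]. intros s y Dsy Hs Hy.
  specialize (K s y Dsy Hs Hy). apply Rabs_def2 in K. lra.
Qed.

Lemma cont2_on_pos_persists D g t0 t1 a b : a <= b -> t0 <= t1 ->
  (forall s y, t0 <= s <= t1 -> a <= y <= b -> D s y) -> cont2_on D g ->
  (forall y, a <= y <= b -> 0 < g t0 y) ->
  exists del, 0 < del /\ forall s y, t0 <= s <= t1 -> s < t0 + del -> a <= y <= b -> 0 < g s y.
Proof.
  intros Hab Ht HD Hc Hpos.
  assert (Hloc : forall x, a <= x <= b -> exists eta, 0 < eta /\
            forall s y, t0 <= s <= t1 -> s < t0 + eta -> a <= y <= b -> Rabs (y - x) < eta ->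
              0 < g s y).
  { intros x Hx. destruct (cont2_on_pos_near D g t0 x (HD t0 x ltac:(lra) Hx) Hc (Hpos x Hx))
      as [eta [Heta K]].
    exists eta. split; [exact Heta|]. intros s y Hs Hs' Hy Hyx.
    apply K; [now apply HD | rewrite Rabs_right; lra | exact Hyx]. }
  (* Sweep [a, b] from the left: [m] is the supremum of the [y] up to which positivity persists. *)
  set (A := fun y => a <= y <= b /\ exists del, 0 < del /\
          forall s z, t0 <= s <= t1 -> s < t0 + del -> a <= z <= y -> 0 < g s z).
  assert (HaA : A a).
  { split; [lra|]. destruct (Hloc a ltac:(lra)) as [eta [Heta K]].
    exists eta. split; [exact Heta|]. intros s z Hs Hs' Hz.
    apply K; [exact Hs | exact Hs' | lra | apply Rabs_def1; lra]. }
  destruct (completeness A) as [m Hm].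
  { exists b. intros y [Hy _]. lra. }
  { now exists a. }
  assert (Hma : a <= m) by (apply Hm; exact HaA).
  assert (Hmb : m <= b) by (apply Hm; intros y [Hy _]; lra).
  destruct (Hloc m ltac:(lra)) as [eta [Heta K]].
  destruct (lub_approx A m Hm eta Heta) as [y [[Hy [dy [Hdy Ky]]] Hym]].
  assert (y <= m) by (apply Hm; split; [exact Hy | exists dy; auto]).
  pose proof (Rmin_l b (m + eta / 2)). pose proof (Rmin_r b (m + eta / 2)).
  pose proof (Rmin_l dy eta). pose proof (Rmin_r dy eta). pose proof (Rmin_pos dy eta Hdy Heta).
  set (y' := Rmin b (m + eta / 2)) in *.
  assert (Hgood : forall s z, t0 <= s <= t1 -> s < t0 + Rmin dy eta -> a <= z <= y' -> 0 < g s z).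
  { intros s z Hs Hs' Hz. destruct (Rle_lt_dec z y); [apply Ky; auto; lra|].
    apply K; [exact Hs | lra | lra | apply Rabs_def1; lra]. }
  assert (y' <= m).
  { apply Hm. split; [unfold y', Rmin; destruct Rle_dec; lra|]. now exists (Rmin dy eta). }
  assert (Hy'b : y' = b) by (unfold y' in *; unfold Rmin in *; destruct Rle_dec; lra).
  exists (Rmin dy eta). split; [lra|].
  intros s z Hs Hs' Hz. apply Hgood; [exact Hs | exact Hs' | lra].
Qed.

Lemma second_derivative_nonneg_at_min (g g1 : R -> R) x0 g2 r : 0 < r ->
  (forall y, Rabs (y - x0) < r -> is_derive g y (g1 y)) -> is_derive g1 x0 g2 ->
  (forall y, Rabs (y - x0) < r -> g x0 <= g y) -> 0 <= g2.
Proof.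
  intros Hr Hg Hg1 Hmin. apply Rnot_lt_le. intros Hg2.
  assert (Hmvt : forall y1 y2, x0 <= y1 < y2 -> y2 < x0 + r ->
            exists c, y1 <= c <= y2 /\ g y2 - g y1 = g1 c * (y2 - y1)).
  { intros y1 y2 H1 H2. destruct (MVT_gen g y1 y2 g1) as [c [Hc E]].
    - rewrite Rmin_left, Rmax_right by lra. intros y Hy. apply Hg. apply Rabs_def1; lra.
    - rewrite Rmin_left, Rmax_right by lra. intros y Hy.
      apply (continuity_pt_of_is_derive _ _ (g1 y)). apply Hg. apply Rabs_def1; lra.
    - rewrite Rmin_left, Rmax_right in Hc by lra. now exists c. }
  (* A minimum forces [g1 x0 <= 0]; with [g2 < 0], [g1] is then negative just right of [x0],
     so by the mean value theorem [g] is flat there, which contradicts [g1 < 0]. *)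
  assert (Hx0 : g1 x0 <= 0).
  { replace 0 with (- 0) by ring.
    apply (deriv_within_le_slope (fun _ => True) g x0 (g1 x0) 0 r Hr).
    - apply deriv_within_of_is_derive, Hg. rewrite Rminus_eq_0, Rabs_R0. exact Hr.
    - intros y Hy. split; [exact I|]. rewrite Rmult_0_l.
      assert (g x0 <= g y) by (apply Hmin; apply Rabs_def1; lra). lra. }
  destruct (proj1 (deriv_within_eps (fun _ => True) g1 x0 g2)
              (deriv_within_of_is_derive _ _ _ _ Hg1) (- g2) ltac:(lra)) as [del [Hdel K]].
  pose proof (Rmin_l del r). pose proof (Rmin_r del r). pose proof (Rmin_pos del r Hdel Hr).
  set (h := Rmin del r) in *.
  assert (Hneg : forall y, x0 < y < x0 + h -> g1 y < 0).
  { intros y Hy. specialize (K y I ltac:(lra) ltac:(rewrite Rabs_right; lra)).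
    apply Rabs_def2 in K.
    assert (g1 y - g1 x0 < 0)
      by (apply (Rmult_lt_reg_r (/ (y - x0))); [apply Rinv_0_lt_compat; lra|];
                                 rewrite Rmult_0_l; unfold Rdiv in K; lra).
    lra. }
  assert (Hflat : forall y, x0 < y < x0 + h -> g y = g x0).
  { intros y Hy. destruct (Hmvt x0 y ltac:(lra) ltac:(lra)) as [c [Hc E]].
    assert (g1 c <= 0) by (destruct (Req_dec c x0) as [->|]; [exact Hx0 | left; apply Hneg; lra]).
    assert (g x0 <= g y) by (apply Hmin; apply Rabs_def1; lra). nra. }
  destruct (Hmvt (x0 + h / 4) (x0 + h / 2) ltac:(lra) ltac:(lra)) as [c [Hc E]].
  rewrite (Hflat (x0 + h / 2)), (Hflat (x0 + h / 4)) in E by lra.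
  assert (g1 c < 0) by (apply Hneg; lra). nra.
Qed.

(** * The heat operator on a rectangle and on an edge *)

Lemma continuity_2d_pt_sep (p q : R -> R) t x :
  continuity_pt p t -> continuity_pt q x -> continuity_2d_pt (fun t x => p t * q x) t x.
Proof.
  intros Hp Hq. apply continuity_2d_pt_mult.
  - apply (continuity_1d_2d_pt_comp p (fun t _ => t)); [exact Hp | apply continuity_2d_pt_id1].
  - apply (continuity_1d_2d_pt_comp q (fun _ x => x)); [exact Hq | apply continuity_2d_pt_id2].
Qed.

Lemma continuity_2d_pt_time (p : R -> R) t x :
  continuity_pt p t -> continuity_2d_pt (fun t _ => p t) t x.
Proof.
  intros Hp.
  apply (continuity_1d_2d_pt_comp p (fun t _ => t)); [exact Hp | apply continuity_2d_pt_id1].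
Qed.

Definition smooth_on (P : R -> R -> Prop) (u ut ux uxx : R -> R -> R) : Prop :=
  forall t x, P t x ->
    is_derive (fun s => u s x) t (ut t x) /\ is_derive (u t) x (ux t x) /\
    is_derive (ux t) x (uxx t x).

Lemma smooth_on_minus P u ut ux uxx z zt zx zxx :
  smooth_on P u ut ux uxx -> smooth_on P z zt zx zxx ->
  smooth_on P (fun t x => u t x - z t x) (fun t x => ut t x - zt t x)
    (fun t x => ux t x - zx t x) (fun t x => uxx t x - zxx t x).
Proof.
  intros Hu Hz t x Ptx.
  destruct (Hu t x Ptx) as (Ut & Ux & Uxx). destruct (Hz t x Ptx) as (Zt & Zx & Zxx).
  split; [|split].
  - exact (is_derive_minus _ _ _ _ _ Ut Zt).
  - exact (is_derive_minus _ _ _ _ _ Ux Zx).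
  - exact (is_derive_minus _ _ _ _ _ Uxx Zxx).
Qed.

Lemma strict_heat_super_rect_pos d t1 t2 a b u ut ux uxx : 0 <= d -> t1 <= t2 -> a < b ->
  cont2_on (fun t x => t1 <= t <= t2 /\ a <= x <= b) u ->
  smooth_on (fun t x => t1 < t <= t2 /\ a < x < b) u ut ux uxx ->
  (forall t x, t1 < t <= t2 -> a < x < b -> d * uxx t x < ut t x) ->
  (forall x, a <= x <= b -> 0 < u t1 x) ->
  (forall t, t1 <= t <= t2 -> 0 < u t a /\ 0 < u t b) ->
  forall t x, t1 <= t <= t2 -> a <= x <= b -> 0 < u t x.
Proof.
  intros Hd Ht Hab Hcont Hsmooth Hheat Hbot Hside t x Htt Hx. revert x Hx.
  apply (continuous_induction (fun t => forall x, a <= x <= b -> 0 < u t x) t1 t2 Ht Hbot);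
    [| |exact Htt].
  - clear t Htt. intros t Htt Hprev.
    assert (HD : forall s y, t <= s <= t2 -> a <= y <= b -> t1 <= s <= t2 /\ a <= y <= b)
      by (intros; split; lra).
    destruct (cont2_on_pos_persists _ u t t2 a b ltac:(lra) ltac:(lra) HD Hcont
                (Hprev t ltac:(lra)))
      as [del [Hdel K]].
    exists del. split; [exact Hdel|]. intros s Hs Hs' x Hx. apply K; [lra | lra | exact Hx].
  - clear t Htt. intros t Htt Hprev x Hx. apply Rnot_le_lt. intros Hle.
    assert (Hge : forall y, a <= y <= b -> 0 <= u t y).
    { intros y Hy.
      apply (cont2_on_nonneg_of_left (fun t x => t1 <= t <= t2 /\ a <= x <= b) u t1 t y);
        [lra | | exact Hcont |].
      - intros s Hs. split; lra.
      - intros s Hs. apply Hprev; lra. }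
    assert (Z : u t x = 0) by (specialize (Hge x Hx); lra).
    assert (Hx' : a < x < b).
    { destruct (Hside t ltac:(lra)) as [Pa Pb].
      split; apply Rnot_le_lt; intros E; [replace x with a in Z | replace x with b in Z]; lra. }
    destruct (Hsmooth t x (conj Htt Hx')) as (Dt & Dx & Dxx).
    assert (Htime : ut t x <= 0).
    { replace 0 with (- 0) by ring.
      apply (deriv_within_le_slope (fun _ => True) (fun s => u s x) t _ 0 (t - t1) ltac:(lra)).
      - now apply deriv_within_of_is_derive.
      - intros s Hs. split; [exact I|]. rewrite Z, Rmult_0_l, Rminus_0_r. left.
        apply Hprev; [lra | exact Hx]. }
    assert (Hspace : 0 <= uxx t x).
    { pose proof (Rmin_l (x - a) (b - x)). pose proof (Rmin_r (x - a) (b - x)).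
      apply (second_derivative_nonneg_at_min (u t) (ux t) x (uxx t x) (Rmin (x - a) (b - x))).
      - apply Rmin_pos; lra.
      - intros y Hy. apply Rabs_def2 in Hy. apply (Hsmooth t y). split; [exact Htt | lra].
      - exact Dxx.
      - intros y Hy. apply Rabs_def2 in Hy. rewrite Z. apply Hge. lra. }
    specialize (Hheat t x Htt Hx'). nra.
Qed.

Lemma heat_super_rect_nonneg d t1 t2 a b u ut ux uxx : 0 <= d -> t1 <= t2 -> a < b ->
  cont2_on (fun t x => t1 <= t <= t2 /\ a <= x <= b) u ->
  smooth_on (fun t x => t1 < t <= t2 /\ a < x < b) u ut ux uxx ->
  (forall t x, t1 < t <= t2 -> a < x < b -> d * uxx t x <= ut t x) ->
  (forall x, a <= x <= b -> 0 <= u t1 x) ->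
  (forall t, t1 <= t <= t2 -> 0 <= u t a /\ 0 <= u t b) ->
  forall t x, t1 <= t <= t2 -> a <= x <= b -> 0 <= u t x.
Proof.
  intros Hd Ht Hab Hcont Hsmooth Hheat Hbot Hside t x Htt Hx.
  apply (nonneg_of_pos_perturbation _ (1 + t - t1) ltac:(lra)). intros eps Heps.
  (* [u + eps (1 + t - t1)] is a strict supersolution. *)
  set (z := fun (s : R) (_ : R) => - eps * (1 + s - t1)).
  enough (0 < u t x - z t x) by (unfold z in *; lra).
  apply (strict_heat_super_rect_pos d t1 t2 a b (fun s y => u s y - z s y)
    (fun s y => ut s y - - eps) (fun s y => ux s y - 0) (fun s y => uxx s y - 0)); try lra.
  - apply cont2_on_minus; [exact Hcont|]. apply cont2_on_of_continuity_2d. intros s y.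
    apply (continuity_2d_pt_time (fun s => - eps * (1 + s - t1))).
    eapply continuity_pt_of_is_derive. auto_derive; auto.
  - apply smooth_on_minus; [exact Hsmooth|]. intros s y _. unfold z.
    split; [|split]; auto_derive; auto; ring.
  - intros s y Hs Hy. specialize (Hheat s y Hs Hy). lra.
  - intros y Hy. specialize (Hbot y Hy). unfold z. nra.
  - intros s Hs. destruct (Hside s Hs). unfold z. split; nra.
Qed.

(* The boundary conditions enter only through a Hopf alternative: at a zero boundary value,
   [u] cannot leave the boundary with a positive slope. *)
Record edge_super (d : R) (u ut ux uxx : R -> R -> R) : Prop := {
  edge_cont : cont2_on (fun t x => 0 <= t /\ 0 <= x <= 1) u;
  edge_smooth : smooth_on (fun t x => 0 < t /\ 0 < x < 1) u ut ux uxx;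
  edge_heat : forall t x, 0 < t -> 0 < x < 1 -> d * uxx t x <= ut t x;
  edge_nonneg : forall t x, 0 <= t -> 0 <= x <= 1 -> 0 <= u t x;
  edge_hopf0 : forall t k r, 0 < t -> u t 0 = 0 -> 0 < k -> 0 < r ->
    ~ (forall y, 0 < y <= r -> k * y <= u t y);
  edge_hopf1 : forall t k r, 0 < t -> u t 1 = 0 -> 0 < k -> 0 < r ->
    ~ (forall y, 0 < y <= r -> k * y <= u t (1 - y)) }.

Section Edge.

Variables (d : R) (u ut ux uxx : R -> R -> R).
Hypotheses (Hd : 0 < d) (Hu : edge_super d u ut ux uxx).

Lemma edge_heat_rect_nonneg t1 t2 a b z zt zx zxx : 0 <= t1 <= t2 -> 0 <= a < b -> b <= 1 ->
  (forall t x, continuity_2d_pt z t x) ->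
  smooth_on (fun t x => t1 < t <= t2 /\ a < x < b) z zt zx zxx ->
  (forall t x, t1 < t <= t2 -> a < x < b -> zt t x <= d * zxx t x) ->
  (forall x, a <= x <= b -> z t1 x <= u t1 x) ->
  (forall t, t1 <= t <= t2 -> z t a <= u t a /\ z t b <= u t b) ->
  forall t x, t1 <= t <= t2 -> a <= x <= b -> z t x <= u t x.
Proof.
  intros Ht Hab Hb Hz Hzs Hzh Hbot Hside t x Htt Hx.
  cut (0 <= u t x - z t x); [lra|].
  apply (heat_super_rect_nonneg d t1 t2 a b (fun t x => u t x - z t x)
           (fun t x => ut t x - zt t x) (fun t x => ux t x - zx t x)
           (fun t x => uxx t x - zxx t x)); try lra.
  - apply cont2_on_minus; [|now apply cont2_on_of_continuity_2d].
    apply (cont2_on_mono (fun t x => 0 <= t /\ 0 <= x <= 1)); [|exact (edge_cont _ _ _ _ _ Hu)].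
    intros s y [Hs Hy]. split; lra.
  - apply smooth_on_minus; [|exact Hzs]. intros s y Hsy.
    apply (edge_smooth _ _ _ _ _ Hu). split; lra.
  - intros s y Hs Hy. pose proof (edge_heat _ _ _ _ _ Hu s y ltac:(lra) ltac:(lra)).
    specialize (Hzh s y Hs Hy). lra.
  - intros y Hy. specialize (Hbot y Hy). lra.
  - intros s Hs. destruct (Hside s Hs). split; lra.
Qed.

Lemma edge_hopf_bound t0 del x0 x1 eta : 0 < del <= t0 -> 0 <= x0 < x1 -> x1 <= 1 -> 0 < eta ->
  (forall s, t0 - del <= s <= t0 -> eta <= u s x1) ->
  exists k, 0 < k /\ forall y, x0 <= y <= x1 -> k * (y - x0) <= u t0 y.
Proof.
  intros Hdel Hx Hx1 Heta Hside.
  set (r := x1 - x0). set (mu := r / (d * del)). set (nu := d * mu * mu).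
  assert (Hmu : 0 < mu) by (unfold mu, r; apply Rdiv_lt_0_compat; nra).
  assert (Hnu0 : 0 < nu) by (unfold nu; apply Rmult_lt_0_compat; [apply Rmult_lt_0_compat|]; lra).
  assert (Hnu : nu * del = mu * r) by (unfold nu, mu; field; lra).
  set (eps := eta / exp (mu * r)).
  assert (Heps : 0 < eps) by (apply Rdiv_lt_0_compat; [lra | apply exp_pos]).
  assert (Hepsr : eps * exp (mu * r) = eta) by (unfold eps; field; apply Rgt_not_eq, exp_pos).
  (* [z] solves the heat equation; [nu del = mu r] makes it nonpositive at time [t0 - del],
     and [eps exp (mu r) = eta] keeps it below [u] on the side [x = x1]. *)
  set (z := fun t x => eps * exp (nu * (t - t0) + mu * (x - x0)) - eps).
  assert (Hcmp : forall y, x0 <= y <= x1 -> z t0 y <= u t0 y).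
  { intros y Hy.
    apply (edge_heat_rect_nonneg (t0 - del) t0 x0 x1 z
             (fun t x => eps * nu * exp (nu * (t - t0) + mu * (x - x0)))
             (fun t x => eps * mu * exp (nu * (t - t0) + mu * (x - x0)))
             (fun t x => eps * mu * mu * exp (nu * (t - t0) + mu * (x - x0)))); try lra.
    - intros t x.
      apply (continuity_2d_pt_ext
               (fun t x => eps * exp (nu * (t - t0)) * exp (mu * (x - x0)) - eps));
        [intros; unfold z; rewrite exp_plus; ring|].
      apply continuity_2d_pt_minus; [|apply continuity_2d_pt_const].
      apply continuity_2d_pt_sep; eapply continuity_pt_of_is_derive; auto_derive; auto.
    - intros t x _. unfold z. split; [|split]; auto_derive; auto; unfold Rminus; ring.
    - intros t x _ _. unfold nu. lra.
    - intros x Hxx. unfold z.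
      assert (exp (nu * (t0 - del - t0) + mu * (x - x0)) <= exp 0)
        by (apply exp_le_compat; replace (nu * (t0 - del - t0)) with (- (mu * r))
              by (rewrite <- Hnu; ring); unfold r; nra).
      pose proof (edge_nonneg _ _ _ _ _ Hu (t0 - del) x ltac:(lra) ltac:(lra)).
      rewrite exp_0 in *. nra.
    - intros t Ht. unfold z. split.
      + assert (exp (nu * (t - t0) + mu * (x0 - x0)) <= exp 0) by (apply exp_le_compat; nra).
        pose proof (edge_nonneg _ _ _ _ _ Hu t x0 ltac:(lra) ltac:(lra)).
        rewrite exp_0 in *. nra.
      + assert (exp (nu * (t - t0) + mu * (x1 - x0)) <= exp (mu * r))
          by (apply exp_le_compat; unfold r; nra).
        specialize (Hside t Ht). nra. }
  exists (eps * mu). split; [nra|]. intros y Hy. specialize (Hcmp y Hy). unfold z in Hcmp.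
  rewrite Rminus_eq_0, Rmult_0_r, Rplus_0_l in Hcmp.
  pose proof (exp_ineq1_le (mu * (y - x0))). nra.
Qed.

Lemma edge_pos_left t0 x0 x1 : 0 < t0 -> 0 <= x0 < x1 -> x1 <= 1 ->
  0 < u t0 x1 -> 0 < u t0 x0.
Proof.
  intros Ht0 Hx Hx1 Hp. apply Rnot_le_lt. intros Hle.
  assert (Z : u t0 x0 = 0)
    by (pose proof (edge_nonneg _ _ _ _ _ Hu t0 x0 ltac:(lra) ltac:(lra)); lra).
  destruct (edge_cont _ _ _ _ _ Hu t0 x1 ltac:(split; lra) (u t0 x1 / 2) ltac:(lra))
    as [del [Hdel K]].
  pose proof (Rmin_l del t0). pose proof (Rmin_r del t0). pose proof (Rmin_pos del t0 Hdel Ht0).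
  destruct (edge_hopf_bound t0 (Rmin del t0 / 2) x0 x1 (u t0 x1 / 2)) as [k [Hk Hlin]];
    try lra.
  { intros s Hs. specialize (K s x1 ltac:(split; lra) ltac:(apply Rabs_def1; lra)
                   ltac:(rewrite Rminus_eq_0, Rabs_R0; lra)).
    apply Rabs_def2 in K. lra. }
  (* [u t0] grows linearly away from its zero [x0]: excluded at [x0 = 0] by the boundary
     condition, and impossible at an interior minimum. *)
  destruct (Req_dec x0 0) as [E|Hx0].
  - subst x0. apply (edge_hopf0 _ _ _ _ _ Hu t0 k x1 Ht0 Z Hk ltac:(lra)).
    intros y Hy. specialize (Hlin y ltac:(lra)). lra.
  - destruct (edge_smooth _ _ _ _ _ Hu t0 x0 ltac:(split; lra)) as (_ & Dx & _).
    apply deriv_within_of_is_derive with (D := fun _ => True) in Dx.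
    assert (k <= ux t0 x0).
    { apply (deriv_within_ge_slope _ _ _ _ k (x1 - x0) ltac:(lra) Dx).
      intros y Hy. split; [exact I|]. rewrite Z, Rminus_0_r. apply Hlin. lra. }
    assert (ux t0 x0 <= - 0).
    { apply (deriv_within_le_slope _ _ _ _ 0 x0 ltac:(lra) Dx).
      intros y Hy. split; [exact I|]. rewrite Z, Rmult_0_l, Rminus_0_r.
      apply (edge_nonneg _ _ _ _ _ Hu); lra. }
    lra.
Qed.

Lemma edge_super_reflect : edge_super d (fun t x => u t (1 - x)) (fun t x => ut t (1 - x))
  (fun t x => - ux t (1 - x)) (fun t x => uxx t (1 - x)).
Proof.
  destruct Hu as [Hc Hs Hh Hn H0 H1]. split.
  - intros t x Dtx eps Heps.
    destruct (Hc t (1 - x) ltac:(destruct Dtx; split; lra) eps Heps) as [del [Hdel K]].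
    exists del. split; [exact Hdel|]. intros s y Dsy Hst Hy.
    apply K; [destruct Dsy; split; lra | exact Hst |].
    replace (1 - y - (1 - x)) with (- (y - x)) by ring. now rewrite Rabs_Ropp.
  - intros t x [Ht Hx]. destruct (Hs t (1 - x) ltac:(split; lra)) as (Dt & Dx & Dxx).
    assert (Hr : is_derive (fun y : R => 1 - y) x (-1)) by (auto_derive; auto; ring).
    split; [exact Dt | split].
    + apply (is_derive_ext _ _ _ _ (fun _ => eq_refl)).
      replace (- ux t (1 - x)) with (scal (-1) (ux t (1 - x)))
        by (unfold scal; simpl; unfold mult; simpl; ring).
      exact (is_derive_comp (u t) _ x _ _ Dx Hr).
    + replace (uxx t (1 - x)) with (opp (scal (-1) (uxx t (1 - x))))
        by (unfold scal, opp; simpl; unfold mult; simpl; ring).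
      exact (is_derive_opp _ _ _ (is_derive_comp (ux t) _ x _ _ Dxx Hr)).
  - intros t x Ht Hx. apply Hh; lra.
  - intros t x Ht Hx. apply Hn; lra.
  - intros t k r Ht Z. replace (1 - 0) with 1 in Z by ring. exact (H1 t k r Ht Z).
  - intros t k r Ht Z Hk Hr N. replace (1 - 1) with 0 in Z by ring. apply (H0 t k r Ht Z Hk Hr).
    intros y Hy. specialize (N y Hy). now replace (1 - (1 - y)) with y in N by ring.
Qed.

Lemma edge_pos_later t1 x1 : 0 <= t1 -> 0 <= x1 <= 1 -> 0 < u t1 x1 ->
  forall t, t1 < t -> exists x, 0 <= x <= 1 /\ 0 < u t x.
Proof.
  intros Ht1 Hx1 Hp t Ht.
  set (c := u t1 x1) in *.
  destruct (edge_cont _ _ _ _ _ Hu t1 x1 ltac:(split; lra) (c / 2) ltac:(lra)) as [eta [Heta K]].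
  set (a := Rmax 0 (x1 - eta / 2)). set (b := Rmin 1 (x1 + eta / 2)).
  assert (Ha : 0 <= a /\ x1 - eta / 2 <= a /\ (a = 0 \/ a = x1 - eta / 2))
    by (unfold a, Rmax; destruct Rle_dec; lra).
  assert (Hb : b <= 1 /\ b <= x1 + eta / 2 /\ (b = 1 \/ b = x1 + eta / 2))
    by (unfold b, Rmin; destruct Rle_dec; lra).
  assert (Hab : a < b) by lra.
  assert (Hbot : forall x, a <= x <= b -> c / 2 < u t1 x).
  { intros x Hx. specialize (K t1 x ltac:(split; lra) ltac:(rewrite Rminus_eq_0, Rabs_R0; lra)
                               ltac:(apply Rabs_def1; lra)).
    apply Rabs_def2 in K. unfold c in *. lra. }
  set (k := PI / (b - a)). set (lam := d * k * k).
  assert (Hk : k * (b - a) = PI) by (unfold k; field; lra).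
  (* A decaying sine mode of the heat equation, vanishing on the sides of the rectangle. *)
  set (z := fun s x => c / 2 * exp (- lam * (s - t1)) * sin (k * (x - a))).
  assert (Hz : forall x, a <= x <= b -> z t x <= u t x).
  { intros x Hx.
    apply (edge_heat_rect_nonneg t1 t a b z
             (fun s x => - (c / 2 * lam * exp (- lam * (s - t1)) * sin (k * (x - a))))
             (fun s x => c / 2 * exp (- lam * (s - t1)) * (k * cos (k * (x - a))))
             (fun s x => - (c / 2 * exp (- lam * (s - t1)) * (k * k * sin (k * (x - a))))));
      try lra.
    - intros s y. apply continuity_2d_pt_sep; eapply continuity_pt_of_is_derive; auto_derive; auto.
    - intros s y _. unfold z. split; [|split]; auto_derive; auto; unfold Rminus; ring.
    - intros s y _ _. unfold lam. lra.
    - intros y Hy. unfold z. rewrite Rminus_eq_0, Rmult_0_r, exp_0.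
      specialize (Hbot y Hy). pose proof (SIN_bound (k * (y - a))). nra.
    - intros s Hs. unfold z. rewrite Rminus_eq_0, Rmult_0_r, sin_0, Hk, sin_PI, !Rmult_0_r.
      split; apply (edge_nonneg _ _ _ _ _ Hu); lra. }
  exists ((a + b) / 2). split; [lra|].
  specialize (Hz ((a + b) / 2) ltac:(lra)). unfold z in Hz.
  replace (k * ((a + b) / 2 - a)) with (PI / 2) in Hz by (unfold k; field; lra).
  rewrite sin_PI2 in Hz. pose proof (exp_pos (- lam * (t - t1))). nra.
Qed.

End Edge.

Lemma edge_pos d u ut ux uxx t x0 : 0 < d -> edge_super d u ut ux uxx -> 0 < t ->
  0 <= x0 <= 1 -> 0 < u t x0 -> forall x, 0 <= x <= 1 -> 0 < u t x.
Proof.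
  intros Hd Hu Ht Hx0 Hp x Hx.
  destruct (Rtotal_order x x0) as [Hlt|[->|Hgt]].
  - apply (edge_pos_left d u ut ux uxx Hd Hu t x x0); lra.
  - exact Hp.
  - pose proof (edge_pos_left d _ _ _ _ Hd (edge_super_reflect d u ut ux uxx Hu) t (1 - x) (1 - x0))
      as H.
    cbv beta in H.
    replace (1 - (1 - x)) with x in H by ring. replace (1 - (1 - x0)) with x0 in H by ring.
    apply H; lra.
Qed.

(** * First touching on the lattice *)

Record lattice_regular (v vt vx vxx : Z -> R -> R -> R) (rho drho : Z -> R -> R) : Prop := {
  lat_cont : forall j, cont2_on (fun t x => 0 <= t /\ 0 <= x <= 1) (v j);
  lat_vt : forall j t x, 0 < t -> 0 < x < 1 -> is_derive (fun s => v j s x) t (vt j t x);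
  lat_vx : forall j t x, 0 < t -> 0 <= x <= 1 ->
    deriv_within (fun y => 0 <= y <= 1) (v j t) x (vx j t x);
  lat_vxx : forall j t x, 0 < t -> 0 < x < 1 -> is_derive (vx j t) x (vxx j t x);
  lat_rho : forall j t, 0 <= t -> deriv_within (fun s => 0 <= s) (rho j) t (drho j t) }.

Lemma lattice_regular_smooth v vt vx vxx rho drho j :
  lattice_regular v vt vx vxx rho drho ->
  smooth_on (fun t x => 0 < t /\ 0 < x < 1) (v j) (vt j) (vx j) (vxx j).
Proof.
  intros Hreg t x [Ht Hx]. split; [|split].
  - exact (lat_vt _ _ _ _ _ _ Hreg j t x Ht Hx).
  - pose proof (Rmin_l x (1 - x)). pose proof (Rmin_r x (1 - x)).
    apply (is_derive_of_deriv_within (fun y => 0 <= y <= 1) _ _ _ (Rmin x (1 - x))).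
    + apply Rmin_pos; lra.
    + intros y Hy. apply Rabs_def2 in Hy. lra.
    + apply (lat_vx _ _ _ _ _ _ Hreg); lra.
  - exact (lat_vxx _ _ _ _ _ _ Hreg j t x Ht Hx).
Qed.

Lemma uniform_delta (Q : Z -> R -> Prop) :
  (forall j del del', 0 < del' <= del -> Q j del -> Q j del') ->
  (forall j, exists del, 0 < del /\ Q j del) ->
  forall n : nat, exists del, 0 < del /\ forall j, (Z.abs j <= Z.of_nat n)%Z -> Q j del.
Proof.
  intros Hmono Hj n. induction n as [|n [d0 [Hd0 K0]]].
  - destruct (Hj 0%Z) as [del [Hdel K]]. exists del. split; [exact Hdel|].
    intros j Hjn. now replace j with 0%Z by lia.
  - destruct (Hj (Z.of_nat (S n))) as [d1 [Hd1 K1]].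
    destruct (Hj (- Z.of_nat (S n))%Z) as [d2 [Hd2 K2]].
    set (dm := Rmin d0 (Rmin d1 d2)).
    assert (Hdm : 0 < dm /\ dm <= d0 /\ dm <= d1 /\ dm <= d2).
    { unfold dm. pose proof (Rmin_l d0 (Rmin d1 d2)). pose proof (Rmin_r d0 (Rmin d1 d2)).
      pose proof (Rmin_l d1 d2). pose proof (Rmin_r d1 d2).
      repeat split; try lra. repeat apply Rmin_pos; lra. }
    exists dm. split; [lra|]. intros j Hjn.
    destruct (Z.eq_dec j (Z.of_nat (S n))) as [->|E1]; [apply (Hmono _ d1); [lra | exact K1]|].
    destruct (Z.eq_dec j (- Z.of_nat (S n))%Z) as [->|E2]; [apply (Hmono _ d2); [lra | exact K2]|].
    apply (Hmono _ d0); [lra|]. apply K0. lia.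
Qed.

Section StrictPositivity.

Variables (alpha beta d T : R) (W Wt Wx Wxx : Z -> R -> R -> R) (S dS : Z -> R -> R).
Hypotheses (Halpha : 0 <= alpha) (Hbeta : 0 <= beta) (Hd : 0 <= d) (HT : 0 <= T)
  (Hreg : lattice_regular W Wt Wx Wxx S dS)
  (Hheat : forall j t x, 0 < t <= T -> 0 < x < 1 -> W j t x = 0 -> d * Wxx j t x < Wt j t x)
  (Hnode : forall j t, 0 < t <= T -> S j t = 0 ->
     alpha * (W j t 0 + W (j - 1)%Z t 1) < dS j t)
  (Hflux0 : forall j t, 0 < t <= T -> W j t 0 = 0 -> beta * S j t < - d * Wx j t 0)
  (Hflux1 : forall j t, 0 < t <= T -> W j t 1 = 0 -> beta * S (j + 1)%Z t < d * Wx j t 1)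
  (* Replaces compactness, which fails on the infinite lattice. *)
  (Hfar : exists n : nat, forall j t x, (Z.of_nat n < Z.abs j)%Z -> 0 <= t <= T ->
     0 <= x <= 1 -> 0 < W j t x /\ 0 < S j t).

Definition lattice_pos (t : R) : Prop :=
  forall j x, 0 <= x <= 1 -> 0 < W j t x /\ 0 < S j t.

Lemma lattice_pos_persists t : 0 <= t < T -> lattice_pos t ->
  exists del, 0 < del /\ forall s, t < s < t + del -> s <= T -> lattice_pos s.
Proof.
  intros Ht Hpos. destruct Hfar as [n Hn].
  destruct (uniform_delta (fun j del => forall s, t <= s <= T -> s < t + del ->
              (forall x, 0 <= x <= 1 -> 0 < W j s x) /\ 0 < S j s)) with (n := n)
    as [del [Hdel K]].
  - intros j del del' Hdd H s Hs Hs'. apply H; [exact Hs | lra].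
  - intros j.
    destruct (cont2_on_pos_persists _ (W j) t T 0 1 ltac:(lra) ltac:(lra)
                (fun s y Hs Hy => conj (Rle_trans _ _ _ (proj1 Ht) (proj1 Hs)) Hy)
                (lat_cont _ _ _ _ _ _ Hreg j) (fun x Hx => proj1 (Hpos j x Hx)))
      as [d1 [Hd1 K1]].
    assert (HSt : 0 < S j t) by apply (Hpos j 0), (conj (Rle_refl 0) Rle_0_1).
    destruct (deriv_within_continuous _ _ _ _ (lat_rho _ _ _ _ _ _ Hreg j t (proj1 Ht)) _ HSt)
      as [d2 [Hd2 K2]].
    exists (Rmin d1 d2). split; [now apply Rmin_pos|].
    pose proof (Rmin_l d1 d2). pose proof (Rmin_r d1 d2).
    intros s Hs Hs'. split; [intros x Hx; apply K1; lra|].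
    specialize (K2 s ltac:(lra) ltac:(rewrite Rabs_right; lra)). apply Rabs_def2 in K2. lra.
  - exists del. split; [exact Hdel|]. intros s Hs HsT j x Hx.
    destruct (Z_le_gt_dec (Z.abs j) (Z.of_nat n)) as [Hj|Hj].
    + destruct (K j Hj s ltac:(lra) ltac:(lra)) as [KW KS]. split; [apply KW, Hx | exact KS].
    + apply Hn; [lia | lra | exact Hx].
Qed.

Lemma lattice_nonneg_closes t : 0 < t -> (forall s, 0 <= s < t -> lattice_pos s) ->
  forall j x, 0 <= x <= 1 -> 0 <= W j t x /\ 0 <= S j t.
Proof.
  intros Ht Hprev j x Hx. split.
  - apply (cont2_on_nonneg_of_left (fun t x => 0 <= t /\ 0 <= x <= 1) (W j) 0 t x Ht).
    + intros s Hs. split; lra.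
    + exact (lat_cont _ _ _ _ _ _ Hreg j).
    + intros s Hs. now apply Hprev.
  - apply (deriv_within_nonneg_of_left (fun s => 0 <= s) (S j) (dS j t) 0 t Ht).
    + intros s Hs. lra.
    + apply (lat_rho _ _ _ _ _ _ Hreg). lra.
    + intros s Hs. apply (Hprev s Hs j 0). lra.
Qed.

Lemma lattice_node_pos_closes t : 0 < t <= T -> (forall s, 0 <= s < t -> lattice_pos s) ->
  forall j, 0 < S j t.
Proof.
  intros Ht Hprev j. apply Rnot_le_lt. intros Hle.
  pose proof (lattice_nonneg_closes t (proj1 Ht) Hprev) as Hnn.
  assert (Z : S j t = 0) by (pose proof (proj2 (Hnn j 0 ltac:(lra))); lra).
  assert (dS j t <= - 0).
  { apply (deriv_within_le_slope _ _ _ _ 0 t (proj1 Ht) (lat_rho _ _ _ _ _ _ Hreg j t ltac:(lra))).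
    intros s Hs. split; [lra|]. rewrite Z, Rmult_0_l, Rminus_0_r. left.
    apply (Hprev s ltac:(lra) j 0). lra. }
  assert (0 <= alpha * (W j t 0 + W (j - 1)%Z t 1)).
  { apply Rmult_le_pos; [exact Halpha|].
    pose proof (proj1 (Hnn j 0 ltac:(lra))). pose proof (proj1 (Hnn (j - 1)%Z 1 ltac:(lra))).
    lra. }
  specialize (Hnode j t Ht Z). lra.
Qed.

Lemma lattice_edge_pos_closes t : 0 < t <= T -> (forall s, 0 <= s < t -> lattice_pos s) ->
  forall j x, 0 <= x <= 1 -> 0 < W j t x.
Proof.
  intros Ht Hprev j x Hx. apply Rnot_le_lt. intros Hle.
  pose proof (lattice_nonneg_closes t (proj1 Ht) Hprev) as Hnn.
  assert (Z : W j t x = 0) by (pose proof (proj1 (Hnn j x Hx)); lra).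
  pose proof (lat_vx _ _ _ _ _ _ Hreg j t x (proj1 Ht) Hx) as Dx.
  destruct (Req_dec x 0) as [->|H0]; [|destruct (Req_dec x 1) as [->|H1]].
  - assert (0 <= Wx j t 0).
    { apply (deriv_within_ge_slope _ _ _ _ 0 1 Rlt_0_1 Dx). intros y Hy. split; [lra|].
      rewrite Z, Rmult_0_l, Rminus_0_r. apply (Hnn j y). lra. }
    assert (0 <= beta * S j t) by (apply Rmult_le_pos; [lra | apply (Hnn j 0); lra]).
    specialize (Hflux0 j t Ht Z). nra.
  - assert (Wx j t 1 <= - 0).
    { apply (deriv_within_le_slope _ _ _ _ 0 1 Rlt_0_1 Dx). intros y Hy. split; [lra|].
      rewrite Z, Rmult_0_l, Rminus_0_r. apply (Hnn j y). lra. }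
    assert (0 <= beta * S (j + 1)%Z t)
      by (apply Rmult_le_pos; [lra | apply (Hnn (j + 1)%Z 0); lra]).
    specialize (Hflux1 j t Ht Z). nra.
  - assert (Hx' : 0 < x < 1) by (destruct Hx as [[?|?] [?|?]]; subst; try tauto; lra).
    destruct (lattice_regular_smooth _ _ _ _ _ _ j Hreg t x (conj (proj1 Ht) Hx'))
      as (Dt & _ & Dxx).
    assert (Wt j t x <= - 0).
    { apply (deriv_within_le_slope (fun _ => True) _ _ _ 0 t (proj1 Ht)
               (deriv_within_of_is_derive _ _ _ _ Dt)).
      intros s Hs. split; [exact I|]. rewrite Z, Rmult_0_l, Rminus_0_r. left.
      apply (Hprev s ltac:(lra) j x Hx). }
    assert (0 <= Wxx j t x).
    { pose proof (Rmin_l x (1 - x)). pose proof (Rmin_r x (1 - x)).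
      apply (second_derivative_nonneg_at_min (W j t) (Wx j t) x _ (Rmin x (1 - x)));
        [apply Rmin_pos; lra | | exact Dxx |].
      - intros y Hy. apply Rabs_def2 in Hy.
        apply (lattice_regular_smooth _ _ _ _ _ _ j Hreg t y). split; lra.
      - intros y Hy. apply Rabs_def2 in Hy. rewrite Z. apply (Hnn j y). lra. }
    specialize (Hheat j t x Ht Hx' Z). nra.
Qed.

Lemma strict_lattice_pos : lattice_pos 0 -> forall t, 0 <= t <= T -> lattice_pos t.
Proof.
  intros H0. apply (continuous_induction lattice_pos 0 T HT H0).
  - intros t Ht Hprev. apply lattice_pos_persists; [exact Ht | apply Hprev; lra].
  - intros t Ht Hprev j x Hx. split.
    + now apply lattice_edge_pos_closes.
    + now apply lattice_node_pos_closes.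
Qed.

End StrictPositivity.

(** * Weak comparison for the linear system *)

(* The weights grow in |j|, so that the perturbation beats the bounded solution far out on
   the lattice, but only by a bounded factor between neighbours, so that the coupling terms
   stay controlled; [edge_weight] is tuned to the flux conditions, see [edge_weight_flux]. *)
Definition node_weight (j : Z) : R := 1 + IZR j * IZR j.

Definition edge_weight (alpha beta : R) (j : Z) : R :=
  beta / alpha * (node_weight j + node_weight (j + 1)).

Lemma node_weight_ge_1 j : 1 <= node_weight j.
Proof. unfold node_weight. nra. Qed.

Lemma node_weight_succ j : node_weight (j + 1) <= 3 * node_weight j.
Proof. unfold node_weight. rewrite plus_IZR. nra. Qed.

Lemma node_weight_pred j : node_weight (j - 1) <= 3 * node_weight j.
Proof. unfold node_weight. rewrite minus_IZR. nra. Qed.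

Lemma node_weight_unbounded C :
  exists n : nat, forall j, (Z.of_nat n < Z.abs j)%Z -> C < node_weight j.
Proof.
  destruct (archimed C) as [HC _]. exists (Z.to_nat (up C)). intros j Hj.
  assert (IZR (up C) <= IZR (Z.abs j)) by (apply IZR_le; lia).
  rewrite abs_IZR in H. unfold node_weight.
  destruct (Rle_dec 0 (IZR j)); [rewrite Rabs_right in H | rewrite Rabs_left in H]; nra.
Qed.

Lemma edge_weight_flux alpha beta j : 0 < alpha ->
  alpha * edge_weight alpha beta j = beta * (node_weight j + node_weight (j + 1)).
Proof. intros H. unfold edge_weight. field. lra. Qed.

Lemma edge_weight_ge alpha beta j : 0 < alpha -> 0 < beta ->
  beta / alpha * node_weight j <= edge_weight alpha beta j.
Proof.
  intros Ha Hb. unfold edge_weight. pose proof (node_weight_ge_1 (j + 1)).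
  assert (0 < beta / alpha) by (apply Rdiv_lt_0_compat; lra). nra.
Qed.

Lemma edge_weight_pos alpha beta j : 0 < alpha -> 0 < beta -> 0 < edge_weight alpha beta j.
Proof.
  intros Ha Hb. apply Rlt_le_trans with (beta / alpha * node_weight j); [|now apply edge_weight_ge].
  pose proof (node_weight_ge_1 j). assert (0 < beta / alpha) by (apply Rdiv_lt_0_compat; lra).
  nra.
Qed.

Lemma lattice_regular_perturb v vt vx vxx rho drho eps K (a b : Z -> R) :
  lattice_regular v vt vx vxx rho drho ->
  lattice_regular (fun j t x => v j t x + eps * exp (K * t) * a j)
    (fun j t x => vt j t x + eps * K * exp (K * t) * a j) vx vxx
    (fun j t => rho j t + eps * exp (K * t) * b j)
    (fun j t => drho j t + eps * K * exp (K * t) * b j).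
Proof.
  intros Hreg.
  assert (Hexp : forall (w : R) t,
             is_derive (fun s => eps * exp (K * s) * w) t (eps * K * exp (K * t) * w))
    by (intros w t; auto_derive; auto; ring).
  split.
  - intros j. apply cont2_on_plus; [exact (lat_cont _ _ _ _ _ _ Hreg j)|].
    apply cont2_on_of_continuity_2d. intros t x.
    apply continuity_2d_pt_time, (continuity_pt_of_is_derive _ _ _ (Hexp (a j) t)).
  - intros j t x Ht Hx.
    exact (is_derive_plus _ _ _ _ _ (lat_vt _ _ _ _ _ _ Hreg j t x Ht Hx) (Hexp (a j) t)).
  - intros j t x Ht Hx. rewrite <- (Rplus_0_r (vx j t x)).
    apply deriv_within_plus; [exact (lat_vx _ _ _ _ _ _ Hreg j t x Ht Hx)|].
    apply deriv_within_of_is_derive, (is_derive_const (K := R_AbsRing) (V := R_NormedModule)).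
  - exact (lat_vxx _ _ _ _ _ _ Hreg).
  - intros j t Ht. apply deriv_within_plus; [exact (lat_rho _ _ _ _ _ _ Hreg j t Ht)|].
    apply deriv_within_of_is_derive, Hexp.
Qed.

Record linear_super (alpha beta d : R) (c : Z -> R -> R)
    (v vt vx vxx : Z -> R -> R -> R) (rho drho : Z -> R -> R) : Prop := {
  lin_reg : lattice_regular v vt vx vxx rho drho;
  lin_heat : forall j t x, 0 < t -> 0 < x < 1 -> d * vxx j t x <= vt j t x;
  lin_node : forall j t, 0 < t ->
    c j t * rho j t + alpha * (v j t 0 + v (j - 1)%Z t 1) <= drho j t;
  lin_flux0 : forall j t, 0 < t -> beta * rho j t <= - d * vx j t 0 + alpha * v j t 0;
  lin_flux1 : forall j t, 0 < t -> beta * rho (j + 1)%Z t <= d * vx j t 1 + alpha * v j t 1;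
  lin_coef : forall T, 0 < T -> exists L, forall j t, 0 <= t <= T -> Rabs (c j t) <= L }.

Section LinearComparison.

Variables (alpha beta d : R) (c : Z -> R -> R) (v vt vx vxx : Z -> R -> R -> R)
  (rho drho : Z -> R -> R).
Hypotheses (Halpha : 0 < alpha) (Hbeta : 0 < beta) (Hd : 0 < d)
  (Hlin : linear_super alpha beta d c v vt vx vxx rho drho).

Section Perturbation.

Variables (T L M K eps : R).
Hypotheses (HT : 0 < T) (Heps : 0 < eps) (HK : L + 8 * beta < K)
  (HL : forall j t, 0 <= t <= T -> Rabs (c j t) <= L)
  (HM : forall t j x, 0 <= t <= T -> 0 <= x <= 1 -> Rabs (v j t x) + Rabs (rho j t) <= M).

Lemma perturbed_node j t : 0 < t <= T ->
  rho j t + eps * exp (K * t) * node_weight j = 0 ->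
  alpha * ((v j t 0 + eps * exp (K * t) * edge_weight alpha beta j) +
           (v (j - 1)%Z t 1 + eps * exp (K * t) * edge_weight alpha beta (j - 1)))
  < drho j t + eps * K * exp (K * t) * node_weight j.
Proof.
  intros Ht Z. set (X := eps * exp (K * t)) in *.
  assert (HX : 0 < X) by (apply Rmult_lt_0_compat; [lra | apply exp_pos]).
  pose proof (lin_node _ _ _ _ _ _ _ _ _ _ Hlin j t (proj1 Ht)) as Hn.
  pose proof (edge_weight_flux alpha beta j Halpha) as F1.
  pose proof (edge_weight_flux alpha beta (j - 1) Halpha) as F2. rewrite Z.sub_add in F2.
  pose proof (node_weight_ge_1 j). pose proof (node_weight_succ j). pose proof (node_weight_pred j).
  assert (Hc : c j t <= L) by (pose proof (HL j t ltac:(lra)); pose proof (Rle_abs (c j t)); lra).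
  set (P := X * node_weight j).
  assert (HP : 0 < P) by (unfold P; nra).
  (* The weights were chosen so that the coupling terms cost at most [(L + 8 beta) P]. *)
  assert (Hcost : c j t * rho j t
                  - alpha * X * (edge_weight alpha beta j + edge_weight alpha beta (j - 1))
                  >= - (L + 8 * beta) * P).
  { replace (rho j t) with (- P) by (unfold P; lra).
    replace (alpha * X * (edge_weight alpha beta j + edge_weight alpha beta (j - 1)))
      with (X * (alpha * edge_weight alpha beta j) + X * (alpha * edge_weight alpha beta (j - 1)))
      by ring.
    rewrite F1, F2.
    assert (c j t * P <= L * P) by (apply Rmult_le_compat_r; lra).
    assert (beta * (X * node_weight (j + 1)) <= beta * (3 * P))
      by (apply Rmult_le_compat_l; unfold P; nra).
    assert (beta * (X * node_weight (j - 1)) <= beta * (3 * P))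
      by (apply Rmult_le_compat_l; unfold P; nra).
    unfold P in *. lra. }
  assert (eps * K * exp (K * t) * node_weight j = K * P) by (unfold P, X; ring).
  nra.
Qed.

Lemma perturbed_flux0 j t : 0 < t ->
  v j t 0 + eps * exp (K * t) * edge_weight alpha beta j = 0 ->
  beta * (rho j t + eps * exp (K * t) * node_weight j) < - d * vx j t 0.
Proof.
  intros Ht Z. set (X := eps * exp (K * t)) in *.
  assert (HX : 0 < X) by (apply Rmult_lt_0_compat; [lra | apply exp_pos]).
  pose proof (lin_flux0 _ _ _ _ _ _ _ _ _ _ Hlin j t Ht).
  pose proof (edge_weight_flux alpha beta j Halpha).
  assert (0 < beta * (X * node_weight (j + 1)))
    by (pose proof (node_weight_ge_1 (j + 1)); apply Rmult_lt_0_compat; nra).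
  replace (v j t 0) with (- (X * edge_weight alpha beta j)) in * by lra.
  nra.
Qed.

Lemma perturbed_flux1 j t : 0 < t ->
  v j t 1 + eps * exp (K * t) * edge_weight alpha beta j = 0 ->
  beta * (rho (j + 1)%Z t + eps * exp (K * t) * node_weight (j + 1)) < d * vx j t 1.
Proof.
  intros Ht Z. set (X := eps * exp (K * t)) in *.
  assert (HX : 0 < X) by (apply Rmult_lt_0_compat; [lra | apply exp_pos]).
  pose proof (lin_flux1 _ _ _ _ _ _ _ _ _ _ Hlin j t Ht).
  pose proof (edge_weight_flux alpha beta j Halpha).
  assert (0 < beta * (X * node_weight j))
    by (pose proof (node_weight_ge_1 j); apply Rmult_lt_0_compat; nra).
  replace (v j t 1) with (- (X * edge_weight alpha beta j)) in * by lra.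
  nra.
Qed.

Lemma perturbation_rate_pos : 0 <= L /\ 0 < K.
Proof.
  pose proof (HL 0%Z 0 ltac:(lra)). pose proof (Rabs_pos (c 0%Z 0)). lra.
Qed.

Lemma perturbed_far : exists n : nat, forall j t x, (Z.of_nat n < Z.abs j)%Z ->
  0 <= t <= T -> 0 <= x <= 1 ->
  0 < v j t x + eps * exp (K * t) * edge_weight alpha beta j /\
  0 < rho j t + eps * exp (K * t) * node_weight j.
Proof.
  assert (HM0 : 0 <= M).
  { pose proof (HM 0 0%Z 0 ltac:(lra) ltac:(lra)).
    pose proof (Rabs_pos (v 0%Z 0 0)). pose proof (Rabs_pos (rho 0%Z 0)). lra. }
  destruct (node_weight_unbounded (M / eps * (1 + alpha / beta))) as [n Hn].
  exists n. intros j t x Hj Ht Hx. specialize (Hn j Hj).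
  pose proof (HM t j x Ht Hx).
  pose proof (Rabs_pos (v j t x)). pose proof (Rabs_pos (rho j t)).
  pose proof (Rle_abs (- v j t x)). pose proof (Rle_abs (- rho j t)). rewrite Rabs_Ropp in *.
  assert (Hexp : 1 <= exp (K * t))
    by (rewrite <- exp_0; apply exp_le_compat; pose proof perturbation_rate_pos; nra).
  assert (Hb : M * (1 + alpha / beta) < eps * node_weight j).
  { apply (Rmult_lt_compat_l eps) in Hn; [|lra].
    replace (eps * (M / eps * (1 + alpha / beta))) with (M * (1 + alpha / beta)) in Hn
      by (field; lra). exact Hn. }
  assert (0 <= M * (alpha / beta)) by (apply Rmult_le_pos; [lra | apply Rdiv_le_0_compat; lra]).
  assert (0 <= M * (beta / alpha)) by (apply Rmult_le_pos; [lra | apply Rdiv_le_0_compat; lra]).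
  pose proof (edge_weight_ge alpha beta j Halpha Hbeta).
  pose proof (node_weight_ge_1 j).
  assert (0 < beta / alpha) by (apply Rdiv_lt_0_compat; lra).
  assert (Ha : M < eps * edge_weight alpha beta j).
  { apply Rlt_le_trans with (eps * (beta / alpha * node_weight j)); [|apply Rmult_le_compat_l; lra].
    replace (eps * (beta / alpha * node_weight j)) with (beta / alpha * (eps * node_weight j))
      by ring.
    apply Rle_lt_trans with (beta / alpha * (M * (1 + alpha / beta)));
      [|apply Rmult_lt_compat_l; lra].
    replace (beta / alpha * (M * (1 + alpha / beta))) with (M * (beta / alpha) + M) by (field; lra).
    lra. }
  split; nra.
Qed.

Lemma perturbed_pos :
  (forall j x, 0 <= x <= 1 -> 0 <= v j 0 x) -> (forall j, 0 <= rho j 0) ->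
  forall t j x, 0 <= t <= T -> 0 <= x <= 1 ->
  0 < v j t x + eps * exp (K * t) * edge_weight alpha beta j /\
  0 < rho j t + eps * exp (K * t) * node_weight j.
Proof.
  intros Hv0 Hr0 t j x Ht Hx.
  destruct perturbation_rate_pos as [HL0 HK0].
  apply (strict_lattice_pos alpha beta d T
           (fun j t x => v j t x + eps * exp (K * t) * edge_weight alpha beta j)
           (fun j t x => vt j t x + eps * K * exp (K * t) * edge_weight alpha beta j) vx vxx
           (fun j t => rho j t + eps * exp (K * t) * node_weight j)
           (fun j t => drho j t + eps * K * exp (K * t) * node_weight j)); try lra.
  - exact (lattice_regular_perturb _ _ _ _ _ _ _ _ _ _ (lin_reg _ _ _ _ _ _ _ _ _ _ Hlin)).
  - intros i s y Hs Hy _. pose proof (lin_heat _ _ _ _ _ _ _ _ _ _ Hlin i s y ltac:(lra) Hy).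
    assert (0 < eps * K * exp (K * s) * edge_weight alpha beta i); [|lra].
    apply Rmult_lt_0_compat; [|now apply edge_weight_pos].
    apply Rmult_lt_0_compat; [nra | apply exp_pos].
  - exact perturbed_node.
  - intros i s Hs. exact (perturbed_flux0 i s (proj1 Hs)).
  - intros i s Hs. exact (perturbed_flux1 i s (proj1 Hs)).
  - exact perturbed_far.
  - intros i y Hy. rewrite Rmult_0_r, exp_0, Rmult_1_r.
    pose proof (edge_weight_pos alpha beta i Halpha Hbeta). pose proof (node_weight_ge_1 i).
    specialize (Hv0 i y Hy). specialize (Hr0 i). split; nra.
Qed.
End Perturbation.

Lemma linear_weak_comparison : locally_bounded_in_time v rho ->
  (forall j x, 0 <= x <= 1 -> 0 <= v j 0 x) -> (forall j, 0 <= rho j 0) ->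
  forall t j x, 0 <= t -> 0 <= x <= 1 -> 0 <= v j t x /\ 0 <= rho j t.
Proof.
  intros Hb Hv0 Hr0 t j x Ht Hx.
  destruct (Hb (t + 1) ltac:(lra)) as [M HM].
  destruct (lin_coef _ _ _ _ _ _ _ _ _ _ Hlin (t + 1) ltac:(lra)) as [L HL].
  pose proof (fun eps Heps => perturbed_pos (t + 1) L M (L + 8 * beta + 1) eps ltac:(lra) Heps
                ltac:(lra) HL HM Hv0 Hr0 t j x ltac:(lra) Hx) as Hp.
  pose proof (exp_pos ((L + 8 * beta + 1) * t)).
  pose proof (edge_weight_pos alpha beta j Halpha Hbeta). pose proof (node_weight_ge_1 j).
  split.
  - apply (nonneg_of_pos_perturbation _ (exp ((L + 8 * beta + 1) * t) * edge_weight alpha beta j));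
      [nra|].
    intros eps Heps. rewrite <- Rmult_assoc. exact (proj1 (Hp eps Heps)).
  - apply (nonneg_of_pos_perturbation _ (exp ((L + 8 * beta + 1) * t) * node_weight j)); [nra|].
    intros eps Heps. rewrite <- Rmult_assoc. exact (proj2 (Hp eps Heps)).
Qed.

End LinearComparison.

(** * Strong comparison for the linear system *)

Lemma Z_ind_both (P : Z -> Prop) j0 : P j0 ->
  (forall j, P j -> P (j + 1)%Z) -> (forall j, P j -> P (j - 1)%Z) -> forall j, P j.
Proof.
  intros H0 Hs Hp j. replace j with (j0 + (j - j0))%Z by lia.
  induction (j - j0)%Z as [|k IH|k IH] using Z.peano_ind.
  - now rewrite Z.add_0_r.
  - replace (j0 + Z.succ k)%Z with (j0 + k + 1)%Z by lia. now apply Hs.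
  - replace (j0 + Z.pred k)%Z with (j0 + k - 1)%Z by lia. now apply Hp.
Qed.

Section StrongComparison.

Variables (alpha beta d : R) (c : Z -> R -> R) (v vt vx vxx : Z -> R -> R -> R)
  (rho drho : Z -> R -> R).
Hypotheses (Halpha : 0 < alpha) (Hbeta : 0 < beta) (Hd : 0 < d)
  (Hlin : linear_super alpha beta d c v vt vx vxx rho drho)
  (Hnonneg : forall t j x, 0 <= t -> 0 <= x <= 1 -> 0 <= v j t x /\ 0 <= rho j t).

Lemma linear_edge_super j : edge_super d (v j) (vt j) (vx j) (vxx j).
Proof.
  destruct Hlin as [Hreg Hheat _ Hflux0 Hflux1 _]. split.
  - exact (lat_cont _ _ _ _ _ _ Hreg j).
  - exact (lattice_regular_smooth _ _ _ _ _ _ j Hreg).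
  - exact (Hheat j).
  - intros t x Ht Hx. now apply Hnonneg.
  - intros t k r Ht Z Hk Hr N.
    pose proof (Rmin_l r 1). pose proof (Rmin_r r 1). pose proof (Rmin_pos r 1 Hr Rlt_0_1).
    assert (k <= vx j t 0).
    { apply (deriv_within_ge_slope _ _ _ _ k (Rmin r 1) ltac:(lra)
               (lat_vx _ _ _ _ _ _ Hreg j t 0 Ht ltac:(lra))).
      intros y Hy. split; [lra|]. rewrite Z, !Rminus_0_r. apply N. lra. }
    pose proof (Hflux0 j t Ht). pose proof (proj2 (Hnonneg t j 0 ltac:(lra) ltac:(lra))).
    rewrite Z in *. nra.
  - intros t k r Ht Z Hk Hr N.
    pose proof (Rmin_l r 1). pose proof (Rmin_r r 1). pose proof (Rmin_pos r 1 Hr Rlt_0_1).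
    assert (vx j t 1 <= - k).
    { apply (deriv_within_le_slope _ _ _ _ k (Rmin r 1) ltac:(lra)
               (lat_vx _ _ _ _ _ _ Hreg j t 1 Ht ltac:(lra))).
      intros y Hy. split; [lra|]. rewrite Z, Rminus_0_r.
      specialize (N (1 - y) ltac:(lra)). now replace (1 - (1 - y)) with y in N by ring. }
    pose proof (Hflux1 j t Ht). pose proof (proj2 (Hnonneg t (j + 1)%Z 0 ltac:(lra) ltac:(lra))).
    rewrite Z in *. nra.
Qed.

Lemma node_pos_edges j t : 0 < t -> 0 < rho j t -> 0 < v j t 0 /\ 0 < v (j - 1)%Z t 1.
Proof.
  intros Ht Hr. destruct Hlin as [Hreg _ _ Hflux0 Hflux1 _]. split.
  - apply Rnot_le_lt. intros Hle.
    assert (Z : v j t 0 = 0) by (pose proof (Hnonneg t j 0 ltac:(lra) ltac:(lra)); lra).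
    assert (0 <= vx j t 0).
    { apply (deriv_within_ge_slope _ _ _ _ 0 1 Rlt_0_1
               (lat_vx _ _ _ _ _ _ Hreg j t 0 Ht ltac:(lra))).
      intros y Hy. split; [lra|]. rewrite Z, Rmult_0_l, Rminus_0_r.
      apply (Hnonneg t j y); lra. }
    pose proof (Hflux0 j t Ht). rewrite Z in *. nra.
  - apply Rnot_le_lt. intros Hle.
    assert (Z : v (j - 1)%Z t 1 = 0)
      by (pose proof (Hnonneg t (j - 1)%Z 1 ltac:(lra) ltac:(lra)); lra).
    assert (vx (j - 1)%Z t 1 <= - 0).
    { apply (deriv_within_le_slope _ _ _ _ 0 1 Rlt_0_1
               (lat_vx _ _ _ _ _ _ Hreg (j - 1)%Z t 1 Ht ltac:(lra))).
      intros y Hy. split; [lra|]. rewrite Z, Rmult_0_l, Rminus_0_r.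
      apply (Hnonneg t (j - 1)%Z y); lra. }
    pose proof (Hflux1 (j - 1)%Z t Ht). rewrite Z.sub_add, Z in *. nra.
Qed.

Lemma edge_pos_node j t : 0 < t -> 0 < v j t 0 \/ 0 < v (j - 1)%Z t 1 -> 0 < rho j t.
Proof.
  intros Ht Hv. apply Rnot_le_lt. intros Hle.
  assert (Z : rho j t = 0) by (pose proof (Hnonneg t j 0 ltac:(lra) ltac:(lra)); lra).
  assert (drho j t <= - 0).
  { apply (deriv_within_le_slope _ _ _ _ 0 t Ht
             (lat_rho _ _ _ _ _ _ (lin_reg _ _ _ _ _ _ _ _ _ _ Hlin) j t ltac:(lra))).
    intros s Hs. split; [lra|]. rewrite Z, Rmult_0_l, Rminus_0_r.
    apply (Hnonneg s j 0); lra. }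
  pose proof (lin_node _ _ _ _ _ _ _ _ _ _ Hlin j t Ht).
  pose proof (proj1 (Hnonneg t j 0 ltac:(lra) ltac:(lra))).
  pose proof (proj1 (Hnonneg t (j - 1)%Z 1 ltac:(lra) ltac:(lra))).
  rewrite Z in *. destruct Hv; nra.
Qed.

Definition edge_positive j : Prop := forall t x, 0 < t -> 0 <= x <= 1 -> 0 < v j t x.

Lemma edge_positive_of_some j :
  (forall t, 0 < t -> exists x, 0 <= x <= 1 /\ 0 < v j t x) -> edge_positive j.
Proof.
  intros H t x Ht Hx. destruct (H t Ht) as [x0 [Hx0 Hp]].
  exact (edge_pos d _ _ _ _ t x0 Hd (linear_edge_super j) Ht Hx0 Hp x Hx).
Qed.

Lemma edge_positive_succ j : edge_positive j -> edge_positive (j + 1)%Z.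
Proof.
  intros Hj. apply edge_positive_of_some. intros t Ht. exists 0. split; [lra|].
  apply (node_pos_edges (j + 1)%Z t Ht), edge_pos_node; [exact Ht|].
  right. rewrite Z.add_simpl_r. apply Hj; lra.
Qed.

Lemma edge_positive_pred j : edge_positive j -> edge_positive (j - 1)%Z.
Proof.
  intros Hj. apply edge_positive_of_some. intros t Ht. exists 1. split; [lra|].
  apply (node_pos_edges j t Ht), edge_pos_node; [exact Ht|].
  left. apply Hj; lra.
Qed.

Lemma edge_positive_start :
  (exists j x, 0 <= x <= 1 /\ 0 < v j 0 x) \/ (exists j, 0 < rho j 0) ->
  exists j, edge_positive j.
Proof.
  intros [[j [x [Hx Hp]]]|[j Hp]]; exists j; apply edge_positive_of_some; intros t Ht.
  - exact (edge_pos_later d _ _ _ _ Hd (linear_edge_super j) 0 x (Rle_refl 0) Hx Hp t Ht).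
  - destruct (deriv_within_continuous _ _ _ _
                (lat_rho _ _ _ _ _ _ (lin_reg _ _ _ _ _ _ _ _ _ _ Hlin) j 0 (Rle_refl 0))
                _ Hp) as [del [Hdel K]].
    pose proof (Rmin_l t del). pose proof (Rmin_r t del). pose proof (Rmin_pos t del Ht Hdel).
    set (t1 := Rmin t del / 2).
    assert (Hr : 0 < rho j t1).
    { specialize (K t1 ltac:(unfold t1; lra) ltac:(unfold t1; rewrite Rminus_0_r, Rabs_right; lra)).
      apply Rabs_def2 in K. lra. }
    destruct (node_pos_edges j t1 ltac:(unfold t1; lra) Hr) as [Hv _].
    exact (edge_pos_later d _ _ _ _ Hd (linear_edge_super j) t1 0 ltac:(unfold t1; lra)
             ltac:(lra) Hv t ltac:(unfold t1; lra)).
Qed.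

Lemma linear_strong_comparison :
  (exists j x, 0 <= x <= 1 /\ 0 < v j 0 x) \/ (exists j, 0 < rho j 0) ->
  forall t j x, 0 < t -> 0 <= x <= 1 -> 0 < v j t x /\ 0 < rho j t.
Proof.
  intros Hinit t j x Ht Hx.
  destruct (edge_positive_start Hinit) as [j0 H0].
  pose proof (Z_ind_both edge_positive j0 H0 edge_positive_succ edge_positive_pred) as Hall.
  split; [now apply Hall|].
  apply edge_pos_node; [exact Ht|]. left. apply Hall; lra.
Qed.

End StrongComparison.

(** * Linearization *)

(* The value at [a = b] is irrelevant: only [diff_quotient f a b * (a - b)] is used. *)
Definition diff_quotient (f : R -> R) (a b : R) : R :=
  if Req_dec_T a b then 0 else (f a - f b) / (a - b).

Lemma diff_quotient_spec f a b : f a - f b = diff_quotient f a b * (a - b).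
Proof.
  unfold diff_quotient. destruct (Req_dec_T a b) as [->|Hab]; [ring|].
  field. now apply Rminus_eq_contra.
Qed.

Lemma diff_quotient_bound f lo hi L a b :
  (forall x y, lo <= x <= hi -> lo <= y <= hi -> Rabs (f x - f y) <= L * Rabs (x - y)) ->
  lo <= a <= hi -> lo <= b <= hi -> Rabs (diff_quotient f a b) <= Rabs L.
Proof.
  intros HL Ha Hb. unfold diff_quotient. destruct (Req_dec_T a b) as [_|Hab].
  - rewrite Rabs_R0. apply Rabs_pos.
  - assert (Hd : 0 < Rabs (a - b)) by (apply Rabs_pos_lt, Rminus_eq_contra, Hab).
    unfold Rdiv. rewrite Rabs_mult, Rabs_inv.
    apply Rle_trans with L; [|apply Rle_abs].
    apply (Rmult_le_reg_r (Rabs (a - b)) _ _ Hd).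
    rewrite Rmult_assoc, Rinv_l by lra. rewrite Rmult_1_r. now apply HL.
Qed.

Lemma locally_bounded_sub vu ru vl rl :
  locally_bounded_in_time vu ru -> locally_bounded_in_time vl rl ->
  locally_bounded_in_time (fun j t x => vu j t x - vl j t x) (fun j t => ru j t - rl j t).
Proof.
  intros Hu Hl T HT. destruct (Hu T HT) as [Mu HMu]. destruct (Hl T HT) as [Ml HMl].
  exists (Mu + Ml). intros t j x Ht Hx. specialize (HMu t j x Ht Hx). specialize (HMl t j x Ht Hx).
  pose proof (Rabs_triang (vu j t x) (- vl j t x)). pose proof (Rabs_triang (ru j t) (- rl j t)).
  rewrite Rabs_Ropp in *. unfold Rminus. lra.
Qed.

Lemma lattice_regular_sub vu ru du vtu vxu vxxu vl rl dl vtl vxl vxxl :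
  regular vu ru du vtu vxu vxxu -> regular vl rl dl vtl vxl vxxl ->
  lattice_regular (fun j t x => vu j t x - vl j t x) (fun j t x => vtu j t x - vtl j t x)
    (fun j t x => vxu j t x - vxl j t x) (fun j t x => vxxu j t x - vxxl j t x)
    (fun j t => ru j t - rl j t) (fun j t => du j t - dl j t).
Proof.
  intros Ru Rl. split; intros j;
    destruct (Ru j) as (Du & _ & Cu & Tu & Xu & XXu & _);
    destruct (Rl j) as (Dl & _ & Cl & Tl & Xl & XXl & _).
  - exact (cont2_on_minus _ _ _ Cu Cl).
  - intros t x Ht Hx. exact (is_derive_minus _ _ _ _ _ (Tu t x Ht Hx) (Tl t x Ht Hx)).
  - intros t x Ht Hx. exact (deriv_within_minus _ _ _ _ _ _ (Xu t x Ht Hx) (Xl t x Ht Hx)).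
  - intros t x Ht Hx. exact (is_derive_minus _ _ _ _ _ (XXu t x Ht Hx) (XXl t x Ht Hx)).
  - intros t Ht. exact (deriv_within_minus _ _ _ _ _ _ (Du t Ht) (Dl t Ht)).
Qed.

Lemma sub_super_difference alpha beta d f vl rl vu ru :
  (forall a b, exists L, forall x y, a <= x <= b -> a <= y <= b ->
     Rabs (f x - f y) <= L * Rabs (x - y)) ->
  locally_bounded_in_time vl rl -> locally_bounded_in_time vu ru ->
  subsolution alpha beta d f vl rl -> supersolution alpha beta d f vu ru ->
  exists vt vx vxx drho, linear_super alpha beta d
    (fun j t => diff_quotient f (ru j t) (rl j t) - 2 * beta)
    (fun j t x => vu j t x - vl j t x) vt vx vxx (fun j t => ru j t - rl j t) drho.
Proof.
  intros Hlip Bl Bu (dl & vtl & vxl & vxxl & Rl & Sl) (du & vtu & vxu & vxxu & Ru & Su).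
  eexists _, _, _, _. split; [exact (lattice_regular_sub _ _ _ _ _ _ _ _ _ _ _ _ Ru Rl)| | | | |].
  - intros j t x Ht Hx. destruct (Su t j Ht) as [Hu _]. destruct (Sl t j Ht) as [Hl _].
    specialize (Hu x Hx). specialize (Hl x Hx). lra.
  - intros j t Ht. destruct (Su t j Ht) as (_ & Hu & _). destruct (Sl t j Ht) as (_ & Hl & _).
    pose proof (diff_quotient_spec f (ru j t) (rl j t)). nra.
  - intros j t Ht. destruct (Su t j Ht) as (_ & _ & Hu & _).
    destruct (Sl t j Ht) as (_ & _ & Hl & _). lra.
  - intros j t Ht. destruct (Su t j Ht) as (_ & _ & _ & Hu).
    destruct (Sl t j Ht) as (_ & _ & _ & Hl). lra.
  - intros T HT. destruct (Bl T HT) as [Ml HMl]. destruct (Bu T HT) as [Mu HMu].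
    destruct (Hlip (- (Ml + Mu)) (Ml + Mu)) as [L HL].
    exists (Rabs L + Rabs (2 * beta)). intros j t Ht.
    specialize (HMl t j 0 Ht ltac:(lra)). specialize (HMu t j 0 Ht ltac:(lra)).
    pose proof (Rabs_pos (vl j t 0)). pose proof (Rabs_pos (vu j t 0)).
    pose proof (Rabs_pos (rl j t)). pose proof (Rabs_pos (ru j t)).
    pose proof (diff_quotient_bound f _ _ L (ru j t) (rl j t) HL
                  (proj1 (Rabs_le_between (ru j t) (Ml + Mu)) ltac:(lra))
                  (proj1 (Rabs_le_between (rl j t) (Ml + Mu)) ltac:(lra))).
    eapply Rle_trans; [apply Rabs_triang|]. rewrite Rabs_Ropp. lra.
Qed.

Theorem proposition2p2 (alpha beta d : R) (f : R -> R)
  (vl : Z -> R -> R -> R) (rl : Z -> R -> R)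
  (vu : Z -> R -> R -> R) (ru : Z -> R -> R) :
  0 < alpha -> 0 < beta -> 0 < d -> KPP_f f ->
  subsolution alpha beta d f vl rl -> supersolution alpha beta d f vu ru ->
  locally_bounded_in_time vl rl -> locally_bounded_in_time vu ru ->
  (forall (j : Z) x, 0 <= x <= 1 -> vl j 0 x <= vu j 0 x) ->
  (forall j : Z, rl j 0 <= ru j 0) ->
  (forall t x (j : Z), 0 < t -> 0 <= x <= 1 -> vl j t x <= vu j t x /\ rl j t <= ru j t) /\
  ((exists (j : Z) x, 0 <= x <= 1 /\ vl j 0 x <> vu j 0 x) \/
   (exists j : Z, rl j 0 <> ru j 0) ->
   forall t x (j : Z), 0 < t -> 0 <= x <= 1 -> vl j t x < vu j t x /\ rl j t < ru j t).
Proof.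
  intros Ha Hb Hd (_ & _ & _ & Hlip & _) Hsub Hsup Bl Bu Iv Ir.
  destruct (sub_super_difference alpha beta d f vl rl vu ru Hlip Bl Bu Hsub Hsup)
    as (vt & vx & vxx & drho & Hlin).
  assert (Hweak := linear_weak_comparison _ _ _ _ _ _ _ _ _ _ Ha Hb Hd Hlin
                     (locally_bounded_sub _ _ _ _ Bu Bl)
                     ltac:(intros j x Hx; specialize (Iv j x Hx); lra)
                     ltac:(intros j; specialize (Ir j); lra)).
  split.
  - intros t x j Ht Hx. destruct (Hweak t j x ltac:(lra) Hx). lra.
  - intros Hne t x j Ht Hx.
    destruct (linear_strong_comparison _ _ _ _ _ _ _ _ _ _ Ha Hb Hd Hlin Hweak) with t j x
      as [Hv Hr]; [|exact Ht|exact Hx|lra].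
    destruct Hne as [(i & y & Hy & Hne)|(i & Hne)]; [left; exists i, y | right; exists i].
    + split; [exact Hy|]. specialize (Iv i y Hy). destruct Iv; [lra | contradiction].
    + specialize (Ir i). destruct Ir; [lra | contradiction].
Qed.
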